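(* Fix a constant $c\ge1$. There is a constant $C>0$ depending only on $c$ such that the following holds for all integers $n\ge3$, $U\ge3$ with $n/c\le U\le cn$. Let $z(0)$ be a row vector indexed by the $2n$ states with nonnegative entries summing to $F>0$, and let $z(t)=z(0)K^t$. Then for every $\epsilon'\in(0,1/2]$ and every $t\ge C\,n\log(n/\epsilon')$, $$|z_x(t)-\pi_xF|\le\frac{\epsilon'}{2n}F\quad\text{for every state }x.$$
   Context: Let $n\ge3$ and $U\ge3$ be integers. The ''original chain'' is the Markov chain on the $2n$ states $\{1,\dots,n,1',\dots,n'\}$ with the following transition probabilities (all unlisted transitions have probability $0$): for $2\le i\le n-1$: $i\to i$ w.p. $1/2$, $i\to i+1$ w.p. $\frac12(1-\frac1U)$, $i\to(i+1)'$ w.p. $\frac1{2U}$; for $2\le i\le n-1$: $i'\to i'$ w.p. $1/2$, $i'\to(i-1)'$ w.p. $\frac12(1-\frac1U)$, $i'\to i-1$ w.p. $\frac1{2U}$; $1\to2$ w.p. $1-\frac1U$, $1\to2'$ w.p. $\frac1U$; $1'\to1$ w.p. $1-\frac1U$, $1'\to1'$ w.p. $\frac1U$; $n\to n'$ w.p. $1-\frac1U$, $n\to n$ w.p. $\frac1U$; $n'\to(n-1)'$ w.p. $1-\frac1U$, $n'\to n-1$ w.p. $\frac1U$. $K$ is its $2n\times 2n$ row-stochastic transition matrix ($K_{xy}$ = probability of moving from $x$ to $y$), and $\pi$ its unique stationary distribution ($\pi K=\pi$). *)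

From Stdlib Require Import Reals Lra Lia List.
Import ListNotations.
Open Scope R_scope.

Fixpoint sumR (m : nat) (f : nat -> R) : R :=
  match m with
  | O => 0
  | S k => sumR k f + f k
  end.

(* Encoding of the 2n states as 0 .. 2n-1:
   unprimed state i (1<=i<=n) is index i-1,
   primed state i' (1<=i<=n) is index n+i-1. *)
Definition unp (n i : nat) : nat := (i - 1)%nat.
Definition prm (n i : nat) : nat := (n + i - 1)%nat.

Definition trans (n U x : nat) : list (nat * R) :=
  let u := / INR U in
  if (x <? n)%nat then
    let i := (x + 1)%nat in
    if (i =? 1)%nat then [(unp n 2, 1 - u); (prm n 2, u)]
    else if (i =? n)%nat then [(prm n n, 1 - u); (unp n n, u)]
    else [(unp n i, 1/2); (unp n (i+1), 1/2 * (1 - u)); (prm n (i+1), / (2 * INR U))]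
  else
    let i := (x - n + 1)%nat in
    if (i =? 1)%nat then [(unp n 1, 1 - u); (prm n 1, u)]
    else if (i =? n)%nat then [(prm n (n-1), 1 - u); (unp n (n-1), u)]
    else [(prm n i, 1/2); (prm n (i-1), 1/2 * (1 - u)); (unp n (i-1), / (2 * INR U))].

Definition K (n U x y : nat) : R :=
  fold_right (fun p acc => (if Nat.eqb (fst p) y then snd p else 0) + acc) 0 (trans n U x).

Definition is_stationary (n U : nat) (pi : nat -> R) : Prop :=
  (forall x, (x < 2 * n)%nat -> 0 <= pi x) /\
  sumR (2 * n) pi = 1 /\
  (forall y, (y < 2 * n)%nat -> sumR (2 * n) (fun x => pi x * K n U x y) = pi y).

Fixpoint zt (n U : nat) (z0 : nat -> R) (t : nat) : nat -> R :=
  match t with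
  | O => z0
  | S t' => fun y => sumR (2 * n) (fun x => zt n U z0 t' x * K n U x y)
  end.

(* Doeblin's argument, with a minorization at time [m = 3n + 8].  Read along the cycle
   1 -> 2 -> ... -> n -> n' -> (n-1)' -> ... -> 1' -> 1, the chain holds with probability 1/2
   and otherwise advances, except that it never holds at the four end states; with probability
   [u = 1/U] a move is replaced by a jump to the mirror position.  Keep only the histories with
   exactly one jump, at one of the first [n] steps.  Reaching a given interior state then costs
   [u (1-u)^m 2^-m] times a count of hold/move patterns, each boundary visit (at most eight)
   fixing one step; summed over the [n] possible jump times, these counts cover a window that
   carries half of the [2^(3n-1)] binomial mass.  As [u >= 1/(cn)] and [(1-u)^m >= e^(-12c)],
   each row of [K^m] dominates a measure of mass [delta(c) > 0] independent of [n], so the l1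
   distance to [pi F] contracts by [1 - delta] every [m = O(n)] steps. *)

From Stdlib Require Import Reals Lra Lia List Bool.
Import ListNotations.

Open Scope R_scope.

Ltac bool_cases := repeat (match goal with
  | |- context [?a <? ?b] => destruct (Nat.ltb_spec a b)
  | |- context [?a <=? ?b] => destruct (Nat.leb_spec a b)
  | |- context [?a =? ?b] => destruct (Nat.eqb_spec a b)
  end; try (exfalso; lia)); cbn [andb orb].

Lemma sumR_ext m f g : (forall i, (i < m)%nat -> f i = g i) -> sumR m f = sumR m g.
Proof.
  revert f g; induction m; intros f g H; simpl; auto.
  rewrite (IHm f g), H; auto.
Qed.

Lemma sumR_le m f g : (forall i, (i < m)%nat -> f i <= g i) -> sumR m f <= sumR m g.
Proof.
  revert f g; induction m; intros f g H; simpl; [lra|].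
  assert (H1 := IHm f g (fun i Hi => H i ltac:(lia))). assert (H2 := H m ltac:(lia)). lra.
Qed.

Lemma sumR_const m c : sumR m (fun _ => c) = INR m * c.
Proof. induction m; simpl sumR; [simpl; lra|]. rewrite IHm, S_INR. lra. Qed.

Lemma sumR_nonneg m f : (forall i, (i < m)%nat -> 0 <= f i) -> 0 <= sumR m f.
Proof.
  intros H. rewrite <- (Rmult_0_r (INR m)), <- sumR_const. apply sumR_le; auto.
Qed.

Lemma sumR_plus m f g : sumR m (fun i => f i + g i) = sumR m f + sumR m g.
Proof. induction m; simpl; [|rewrite IHm]; lra. Qed.

Lemma sumR_minus m f g : sumR m (fun i => f i - g i) = sumR m f - sumR m g.
Proof. induction m; simpl; [|rewrite IHm]; lra. Qed.

Lemma sumR_scal_l m c f : sumR m (fun i => c * f i) = c * sumR m f.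
Proof. induction m; simpl; [|rewrite IHm]; lra. Qed.

Lemma sumR_scal_r m c f : sumR m (fun i => f i * c) = sumR m f * c.
Proof. induction m; simpl; [|rewrite IHm]; lra. Qed.

Lemma sumR_add a b f : sumR (a + b) f = sumR a f + sumR b (fun i => f (a + i)%nat).
Proof.
  induction b; simpl.
  - rewrite Nat.add_0_r; lra.
  - rewrite Nat.add_succ_r; simpl. rewrite IHb. lra.
Qed.

Lemma sumR_shift m f : sumR (S m) f = f 0%nat + sumR m (fun i => f (S i)).
Proof. replace (S m) with (1 + m)%nat by lia. rewrite sumR_add. simpl. lra. Qed.

Lemma sumR_swap a b f :
  sumR a (fun i => sumR b (fun j => f i j)) = sumR b (fun j => sumR a (fun i => f i j)).
Proof.
  revert b f; induction a; intros b f; simpl.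
  - induction b; simpl; lra.
  - rewrite IHa, <- sumR_plus. reflexivity.
Qed.

Lemma sumR_abs m f : Rabs (sumR m f) <= sumR m (fun i => Rabs (f i)).
Proof.
  induction m; simpl.
  - rewrite Rabs_R0; lra.
  - eapply Rle_trans; [apply Rabs_triang|]. lra.
Qed.

Lemma sumR_le_prefix a b f :
  (a <= b)%nat -> (forall i, (i < b)%nat -> 0 <= f i) -> sumR a f <= sumR b f.
Proof.
  intros Hab H. replace b with (a + (b - a))%nat by lia. rewrite sumR_add.
  assert (0 <= sumR (b - a) (fun i => f (a + i)%nat)) by (apply sumR_nonneg; intros; apply H; lia).
  lra.
Qed.

Lemma sumR_term_le m f k : (forall i, (i < m)%nat -> 0 <= f i) -> (k < m)%nat -> f k <= sumR m f.
Proof.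
  intros H Hk. replace m with (S k + (m - S k))%nat by lia. rewrite sumR_add.
  assert (0 <= sumR k f) by (apply sumR_nonneg; intros; apply H; lia).
  assert (0 <= sumR (m - S k) (fun i => f (S k + i)%nat)) by (apply sumR_nonneg; intros; apply H; lia).
  cbn [sumR]. lra.
Qed.

Lemma sumR_indicator m k c :
  (k < m)%nat -> sumR m (fun i => if Nat.eqb i k then c else 0) = c.
Proof.
  intros Hk. replace m with (S k + (m - S k))%nat by lia. rewrite sumR_add. cbn [sumR].
  rewrite Nat.eqb_refl.
  rewrite (sumR_ext k _ (fun _ => 0)), (sumR_ext (m - S k) _ (fun _ => 0)), !sumR_const.
  - lra.
  - intros i _. destruct (Nat.eqb_spec (S k + i) k); [lia|auto].
  - intros i Hi. destruct (Nat.eqb_spec i k); [lia|auto].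
Qed.

Lemma sumR_pairs L h b :
  sumR L (fun i => h (b + 2 * i)%nat + h (b + 2 * i + 1)%nat) = sumR (2 * L) (fun k => h (b + k)%nat).
Proof.
  induction L; [reflexivity|]. replace (2 * S L)%nat with (S (S (2 * L))) by lia.
  cbn [sumR]. rewrite IHL. replace (b + S (2 * L))%nat with (b + 2 * L + 1)%nat by lia. lra.
Qed.

Lemma sumR_window_le n h b : (1 <= b <= n + 1)%nat -> (forall k, 0 <= h k) ->
  sumR n (fun k => h (n + 1 + k)%nat) <= sumR (2 * n) (fun k => h (b + k)%nat).
Proof.
  intros Hb Hh. replace (2 * n)%nat with ((n + 1 - b) + n + (b - 1))%nat by lia. rewrite !sumR_add.
  assert (0 <= sumR (n + 1 - b) (fun k => h (b + k)%nat)) by (apply sumR_nonneg; auto).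
  assert (0 <= sumR (b - 1) (fun i => h (b + (n + 1 - b + n + i))%nat)) by (apply sumR_nonneg; auto).
  rewrite (sumR_ext n (fun i => h (b + (n + 1 - b + i))%nat) (fun k => h (n + 1 + k)%nat))
    by (intros; f_equal; lia).
  lra.
Qed.

Open Scope nat_scope.

Fixpoint binom (a k : nat) : nat :=
  match a, k with
  | _, O => 1
  | O, S _ => 0
  | S a', S k' => binom a' k' + binom a' (S k')
  end.

Lemma binom_small a k : a < k -> binom a k = 0.
Proof. revert k; induction a; intros k H; destruct k; simpl; try lia. rewrite !IHa; lia. Qed.

Lemma binom_gt0 a k : k <= a -> 1 <= binom a k.
Proof. revert k; induction a; intros k H; destruct k; simpl; try lia. specialize (IHa k ltac:(lia)). lia. Qed.

Lemma binom_0 a : binom a 0 = 1.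
Proof. destruct a; reflexivity. Qed.

Open Scope R_scope.

Lemma binom_sum L x : sumR (S L) (fun j => INR (binom L j) * x ^ j) = (1 + x) ^ L.
Proof.
  induction L.
  - simpl. lra.
  - rewrite sumR_shift, binom_0. simpl pow at 1.
    transitivity (1 + (x * sumR (S L) (fun j => INR (binom L j) * x ^ j)
                 + sumR (S L) (fun j => INR (binom L (S j)) * x ^ S j))).
    { f_equal; [simpl; lra|]. rewrite <- sumR_scal_l, <- sumR_plus. apply sumR_ext. intros j _.
      simpl binom. rewrite plus_INR. simpl pow. ring. }
    assert (E : sumR (S L) (fun j => INR (binom L (S j)) * x ^ S j)
                = sumR (S L) (fun j => INR (binom L j) * x ^ j) - 1).
    { pose proof (sumR_shift (S L) (fun j => INR (binom L j) * x ^ j)) as E. cbn [sumR] in E |- *.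
      rewrite (binom_small L (S L)) in E |- * by lia. rewrite binom_0, pow_O in E. simpl INR in E |- *. lra. }
    rewrite E, IHL. simpl. ring.
Qed.

Lemma pow_le_of_le1 a i j : 0 <= a <= 1 -> (i <= j)%nat -> a ^ j <= a ^ i.
Proof.
  intros Ha Hij. replace j with (i + (j - i))%nat by lia. rewrite pow_add.
  assert (0 <= a ^ i) by (apply pow_le; lra).
  assert (a ^ (j - i) <= 1) by (rewrite <- (pow1 (j - i)); apply pow_incr; lra).
  assert (0 <= a ^ (j - i)) by (apply pow_le; lra). nra.
Qed.

Lemma half_pow_mul_ge1 j T : (j <= T)%nat -> 1 <= (/ 2) ^ j * 2 ^ T.
Proof.
  intros. replace T with (j + (T - j))%nat by lia. rewrite pow_add, <- Rmult_assoc, <- Rpow_mult_distr.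
  replace (/ 2 * 2) with 1 by field. rewrite pow1, Rmult_1_l. apply pow_R1_Rle. lra.
Qed.

(* Tail bounds from the exponential moments [sum binom L j (1/2)^j = (3/2)^L] and
   [sum binom L j 2^j = 3^L]. *)
Lemma binom_lower_tail L T : (T <= S L)%nat -> sumR T (fun j => INR (binom L j)) <= 2 ^ T * (3 / 2) ^ L.
Proof.
  intros HT. apply Rle_trans with (sumR T (fun j => INR (binom L j) * (/ 2) ^ j) * 2 ^ T).
  { rewrite <- sumR_scal_r. apply sumR_le. intros j Hj. assert (0 <= INR (binom L j)) by apply pos_INR.
    pose proof (half_pow_mul_ge1 j T ltac:(lia)). nra. }
  rewrite Rmult_comm. apply Rmult_le_compat_l; [apply pow_le; lra|].
  replace (3 / 2) with (1 + / 2) by field. rewrite <- binom_sum. apply sumR_le_prefix; [lia|].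
  intros. apply Rmult_le_pos; [apply pos_INR | apply pow_le; lra].
Qed.

Lemma binom_upper_tail L T :
  (T <= S L)%nat -> sumR (S L - T) (fun k => INR (binom L (T + k))) <= 3 ^ L * (/ 2) ^ T.
Proof.
  intros HT. apply Rle_trans with (sumR (S L - T) (fun k => INR (binom L (T + k)) * 2 ^ (T + k)) * (/ 2) ^ T).
  { rewrite <- sumR_scal_r. apply sumR_le. intros k _. assert (0 <= INR (binom L (T + k))) by apply pos_INR.
    assert (1 <= 2 ^ (T + k) * (/ 2) ^ T) by (rewrite Rmult_comm; apply half_pow_mul_ge1; lia). nra. }
  apply Rmult_le_compat_r; [apply pow_le; lra|].
  replace 3 with (1 + 2) by ring. rewrite <- binom_sum.
  replace (S L) with (T + (S L - T))%nat at 2 by lia. rewrite sumR_add.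
  assert (0 <= sumR T (fun j => INR (binom L j) * 2 ^ j))
    by (apply sumR_nonneg; intros; apply Rmult_le_pos; [apply pos_INR | apply pow_le; lra]).
  lra.
Qed.

Lemma lower_tail_estimate k : 2 ^ k * (3 / 2) ^ (3 * k + 23) <= 2 ^ (3 * k + 23) / 4.
Proof.
  induction k; [simpl; lra|].
  replace (3 * S k + 23)%nat with ((3 * k + 23) + 3)%nat by lia. remember (3 * k + 23)%nat as b.
  rewrite !pow_add, <- tech_pow_Rmult.
  replace ((3 / 2) ^ 3) with (27 / 8) by (simpl; field). replace (2 ^ 3) with 8 by (simpl; ring).
  assert (0 < 2 ^ k) by (apply pow_lt; lra). assert (0 < (3 / 2) ^ b) by (apply pow_lt; lra).
  nra.
Qed.

Lemma upper_tail_estimate k : 3 ^ (3 * k + 125) * (/ 2) ^ (2 * k + 76) <= 2 ^ (3 * k + 125) / 4.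
Proof.
  induction k.
  - assert (H : 4 * 3 ^ 125 <= 2 ^ 201).
    { rewrite !pow_IZR, <- mult_IZR. apply IZR_le. vm_compute. discriminate. }
    replace (2 ^ 201) with (2 ^ 125 * 2 ^ 76) in H by (rewrite <- pow_add; reflexivity).
    assert (E : (/ 2) ^ 76 * 2 ^ 76 = 1) by (rewrite <- Rpow_mult_distr, Rinv_l, pow1; lra).
    assert (0 < (/ 2) ^ 76) by (apply pow_lt; lra). simpl Nat.add. simpl Nat.mul. nra.
  - replace (3 * S k + 125)%nat with ((3 * k + 125) + 3)%nat by lia.
    replace (2 * S k + 76)%nat with ((2 * k + 76) + 2)%nat by lia.
    remember (3 * k + 125)%nat as a. remember (2 * k + 76)%nat as b. rewrite !pow_add.
    replace (3 ^ 3) with 27 by (simpl; ring). replace (2 ^ 3) with 8 by (simpl; ring).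
    replace ((/ 2) ^ 2) with (/ 4) by (simpl; field).
    assert (0 < 3 ^ a) by (apply pow_lt; lra). assert (0 < (/ 2) ^ b) by (apply pow_lt; lra). nra.
Qed.

(* Both tails outside the window [n - 8, 2n - 8) carry at most a quarter of the total mass. *)
Lemma binom_window_lower n : (42 <= n)%nat ->
  2 ^ (3 * n - 2) <= sumR n (fun k => INR (binom (3 * n - 1) (n - 8 + k))).
Proof.
  intros Hn. set (L := (3 * n - 1)%nat).
  pose proof (binom_sum L 1) as Htot. replace (1 + 1) with 2 in Htot by ring.
  rewrite (sumR_ext (S L) _ (fun j => INR (binom L j))) in Htot by (intros; rewrite pow1; ring).
  replace (S L) with ((n - 8) + n + (S L - (2 * n - 8)))%nat in Htot by (unfold L; lia).
  rewrite !sumR_add in Htot.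
  pose proof (binom_lower_tail L (n - 8) ltac:(unfold L; lia)) as Hlow.
  pose proof (binom_upper_tail L (2 * n - 8) ltac:(unfold L; lia)) as Hup.
  rewrite (sumR_ext _ (fun i => INR (binom L (n - 8 + n + i))) (fun k => INR (binom L (2 * n - 8 + k))))
    in Htot by (intros; do 3 f_equal; lia).
  assert (2 ^ (n - 8) * (3 / 2) ^ L <= 2 ^ L / 4).
  { unfold L. replace (3 * n - 1)%nat with (3 * (n - 8) + 23)%nat by lia.
    apply lower_tail_estimate. }
  assert (3 ^ L * (/ 2) ^ (2 * n - 8) <= 2 ^ L / 4).
  { unfold L. replace (3 * n - 1)%nat with (3 * (n - 42) + 125)%nat by lia.
    replace (2 * n - 8)%nat with (2 * (n - 42) + 76)%nat by lia. apply upper_tail_estimate. }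
  assert (E : 2 ^ (3 * n - 2) = 2 ^ L / 2).
  { unfold L. replace (3 * n - 1)%nat with (S (3 * n - 2)) by lia. simpl. field. }
  rewrite E. lra.
Qed.

(** * Lattice paths with forced moves *)

Open Scope nat_scope.

(* [npaths t b r] counts the hold/move sequences of length [t] with [r] moves,
   [b] of which are prescribed: [binom (t - b) (r - b)] inside the range [b <= r <= t].
   [npaths_bd] plays the same role for a walker sitting on a boundary state, whose next
   step is a prescribed move. *)
Definition npaths (t b r : nat) : nat :=
  if (b <=? r) && (r <=? t) then binom (t - b) (r - b) else 0.
Definition npaths_bd (t b r : nat) : nat :=
  if (t =? b) && (r =? b) then 1 else npaths t (S b) r.

Lemma npaths_shift t b r : npaths (S t) (S b) (S r) = npaths t b r.
Proof. reflexivity. Qed.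

Lemma npaths_00 t : npaths t 0 0 = 1.
Proof. unfold npaths; simpl. apply binom_0. Qed.

Lemma npaths_gt0 t b r : b <= r -> r <= t -> 1 <= npaths t b r.
Proof. intros. unfold npaths. bool_cases. apply binom_gt0. lia. Qed.

Lemma npaths_pascal_t t b r : b <= r -> npaths (S t) b (S r) = npaths t b (S r) + npaths t b r.
Proof.
  intros H. unfold npaths. bool_cases; try lia;
    replace (S t - b) with (S (t - b)) by lia; replace (S r - b) with (S (r - b)) by lia; simpl.
  - lia.
  - rewrite (binom_small (t - b) (S (r - b))); lia.
Qed.

Lemma npaths_pascal_b t b r :
  ~ (t = b /\ r = b) -> npaths t b r = npaths t (S b) (S r) + npaths t (S b) r.
Proof.
  intros H. unfold npaths. bool_cases; try lia.
  - replace (t - b) with (S (t - S b)) by lia. replace (r - b) with (S (r - S b)) by lia.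
    replace (S r - S b) with (S (r - S b)) by lia. simpl. lia.
  - replace r with b by lia. rewrite !Nat.sub_diag, !binom_0. lia.
  - replace r with t in * by lia. replace (t - b) with (S (t - S b)) by lia. simpl.
    rewrite (binom_small (t - S b) (S (t - S b))); lia.
Qed.

Lemma npaths_antimono_b t b d r : npaths t (b + d) r <= npaths t b r.
Proof.
  induction d; [rewrite Nat.add_0_r; lia|].
  rewrite Nat.add_succ_r. eapply Nat.le_trans; [|apply IHd].
  destruct (Nat.eq_dec t (b + d)) as [->|Ht]; [destruct (Nat.eq_dec r (b + d)) as [->|Hr]|].
  - unfold npaths. bool_cases. lia.
  - rewrite (npaths_pascal_b (b + d) (b + d) r); lia.
  - rewrite (npaths_pascal_b t (b + d) r); lia.
Qed.

Lemma npaths_t0 b r : 0 < r -> npaths 0 b r = 0.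
Proof. intros. unfold npaths. now bool_cases. Qed.

Lemma npaths_bd_shift t b r : npaths_bd (S t) (S b) (S r) = npaths_bd t b r.
Proof. reflexivity. Qed.

Lemma npaths_bd_t0 b r : 0 < r -> npaths_bd 0 b r = 0.
Proof. intros. unfold npaths_bd. bool_cases; apply npaths_t0; lia. Qed.

Lemma npaths_bd_S00 t : npaths_bd (S t) 0 0 = 0.
Proof. reflexivity. Qed.

Lemma npaths_bd_leave t b r : b <= r -> npaths_bd (S t) b (S r) = npaths t b r.
Proof.
  intros. unfold npaths_bd. destruct (Nat.eqb_spec (S r) b); [lia|].
  rewrite andb_false_r. apply npaths_shift.
Qed.

Lemma npaths_bd_enter t b r : npaths t b r <= npaths t (S b) (S r) + npaths_bd t b r.
Proof.
  unfold npaths_bd. bool_cases.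
  - subst. unfold npaths. bool_cases. rewrite Nat.sub_diag. simpl. lia.
  - rewrite (npaths_pascal_b t b r); lia.
  - rewrite (npaths_pascal_b t b r); lia.
  - rewrite (npaths_pascal_b t b r); lia.
Qed.

Open Scope R_scope.

Definition hold_prob (bd : bool) : R := if bd then 0 else / 2.
Definition move_prob (bd : bool) : R := if bd then 1 else / 2.

Lemma move_prob_nonneg bd : 0 <= move_prob bd.
Proof. destruct bd; simpl; lra. Qed.

(* [path_weight t b r bd] bounds from below the probability of having made [r] moves in [t]
   steps, [b] of them from a boundary state, and of being on a boundary state iff [bd]. *)
Definition path_weight (t b r : nat) (bd : bool) : R :=
  if bd then (/ 2) ^ S t * INR (npaths_bd t b r) else (/ 2) ^ t * INR (npaths t b r).

Lemma path_weight_nonneg t b r bd : 0 <= path_weight t b r bd.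
Proof.
  unfold path_weight. assert (0 < (/ 2) ^ t) by (apply pow_lt; lra).
  assert (0 < (/ 2) ^ S t) by (apply pow_lt; lra).
  destruct bd; apply Rmult_le_pos; try lra; apply pos_INR.
Qed.

Lemma path_weight_step t b r bd bd' : (b <= r)%nat ->
  path_weight (S t) (b + Nat.b2n bd') (S r) bd <=
    hold_prob bd * path_weight t (b + Nat.b2n bd') (S r) bd + move_prob bd' * path_weight t b r bd'.
Proof.
  intros Hbr. assert (Hpow : 0 < (/ 2) ^ t) by (apply pow_lt; lra).
  destruct bd', bd; unfold path_weight, hold_prob, move_prob; cbn [Nat.b2n];
    rewrite ?Nat.add_0_r, ?Nat.add_1_r.
  - rewrite npaths_bd_shift. simpl. assert (0 <= INR (npaths_bd t b r)) by apply pos_INR. nra.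
  - rewrite npaths_shift. assert (H := npaths_bd_enter t b r).
    apply le_INR in H. rewrite plus_INR in H. simpl. nra.
  - rewrite npaths_bd_leave by lia. simpl. assert (0 <= INR (npaths t b r)) by apply pos_INR. nra.
  - rewrite npaths_pascal_t, plus_INR by lia. simpl. nra.
Qed.

Lemma path_weight_t0 b r bd : (0 < r)%nat -> path_weight 0 b r bd = 0.
Proof.
  intros. unfold path_weight.
  destruct bd; [rewrite npaths_bd_t0 | rewrite npaths_t0]; auto; simpl; lra.
Qed.

Lemma path_weight_00_step t bd : path_weight (S t) 0 0 bd <= hold_prob bd * path_weight t 0 0 bd.
Proof.
  unfold path_weight, hold_prob. destruct bd.
  - rewrite npaths_bd_S00. simpl. lra.
  - rewrite !npaths_00. simpl. lra.
Qed.

Lemma path_weight_000_le1 bd : path_weight 0 0 0 bd <= 1.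
Proof. unfold path_weight. destruct bd; unfold npaths_bd, npaths; simpl; lra. Qed.

Lemma npaths_window n k : (8 <= n)%nat -> (k < n)%nat ->
  npaths (3 * n + 8) 9 (n + 1 + k) = binom (3 * n - 1) (n - 8 + k).
Proof. intros. unfold npaths. bool_cases. f_equal; lia. Qed.

(** * The chain seen along a cycle *)

Section Cycle.

Variables n U : nat.
Hypothesis n_ge3 : (3 <= n)%nat.
Hypothesis U_ge1 : (1 <= U)%nat.

(* Position [k] on the cycle 1 -> 2 -> ... -> n -> n' -> (n-1)' -> ... -> 1' -> 1 is the state
   with index [cycle_index k]; the map is an involution, so it also turns indices into positions.
   Away from the two ends the chain advances along this cycle, and with probability about [1/U]
   it jumps to the mirror position [cycle_flip k]. *)
Definition cycle_index (k : nat) : nat := if (k <? n)%nat then k else (3 * n - 1 - k)%nat.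
Definition cycle_next (k : nat) : nat := if (k =? 2 * n - 1)%nat then 0%nat else S k.
Definition cycle_flip (k : nat) : nat :=
  if (k <=? 2 * n - 2)%nat then (2 * n - 2 - k)%nat else (2 * n - 1)%nat.
Definition on_boundary (k : nat) : bool := ((k =? 0) || (k =? n - 1) || (k =? n) || (k =? 2 * n - 1))%nat.

Definition cycle_kernel (k l : nat) : R :=
  (if (l =? k)%nat then hold_prob (on_boundary k) else 0) +
  (if (l =? cycle_next k)%nat then (1 - / INR U) * move_prob (on_boundary k) else 0) +
  (if (l =? cycle_flip k)%nat then / INR U * move_prob (on_boundary k) else 0).

Lemma cycle_index_lt k : (k < 2 * n)%nat -> (cycle_index k < 2 * n)%nat.
Proof. intros. unfold cycle_index. bool_cases; lia. Qed.

Lemma cycle_index_involutive k : (k < 2 * n)%nat -> cycle_index (cycle_index k) = k.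
Proof. intros. unfold cycle_index. bool_cases; lia. Qed.

Lemma cycle_next_lt k : (k < 2 * n)%nat -> (cycle_next k < 2 * n)%nat.
Proof. intros. unfold cycle_next. bool_cases; lia. Qed.

Lemma cycle_flip_lt k : (k < 2 * n)%nat -> (cycle_flip k < 2 * n)%nat.
Proof. intros. unfold cycle_flip. bool_cases; lia. Qed.

Lemma inv_U_bounds : 0 < / INR U <= 1.
Proof.
  assert (1 <= INR U) by (apply (le_INR 1); lia). split.
  - apply Rinv_0_lt_compat; lra.
  - rewrite <- Rinv_1. apply Rinv_le_contravar; lra.
Qed.

Ltac list_eq := repeat match goal with
  | |- cons _ _ = cons _ _ => apply f_equal2
  | |- pair _ _ = pair _ _ => apply f_equal2
  end; try reflexivity; try lia; try lra.

Ltac trans_simpl := intros; unfold trans, unp, prm; cbv zeta; bool_cases; list_eq.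

Lemma trans_first : trans n U 0 = [(1%nat, 1 - / INR U); ((n + 1)%nat, / INR U)].
Proof. trans_simpl. Qed.

Lemma trans_unprimed k : (1 <= k <= n - 2)%nat ->
  trans n U k = [(k, 1 / 2); (S k, 1 / 2 * (1 - / INR U)); ((n + k + 1)%nat, / (2 * INR U))].
Proof. trans_simpl. Qed.

Lemma trans_last : trans n U (n - 1) = [((2 * n - 1)%nat, 1 - / INR U); ((n - 1)%nat, / INR U)].
Proof. trans_simpl. Qed.

Lemma trans_first' : trans n U n = [(0%nat, 1 - / INR U); (n, / INR U)].
Proof. trans_simpl. Qed.

Lemma trans_primed k : (n + 1 <= k <= 2 * n - 2)%nat ->
  trans n U k = [(k, 1 / 2); ((k - 1)%nat, 1 / 2 * (1 - / INR U)); ((k - n - 1)%nat, / (2 * INR U))].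
Proof. trans_simpl. Qed.

Lemma trans_last' : trans n U (2 * n - 1) = [((2 * n - 2)%nat, 1 - / INR U); ((n - 2)%nat, / INR U)].
Proof. trans_simpl. Qed.

Lemma index_cases k : (k < 2 * n)%nat ->
  k = 0%nat \/ (1 <= k <= n - 2)%nat \/ k = (n - 1)%nat \/ k = n \/
  (n + 1 <= k <= 2 * n - 2)%nat \/ k = (2 * n - 1)%nat.
Proof. lia. Qed.

Lemma K_nonneg a b : 0 <= K n U a b.
Proof.
  assert (Hu := inv_U_bounds). unfold K.
  assert (Htrans : Forall (fun p => 0 <= snd p) (trans n U a)).
  { unfold trans. cbv zeta. rewrite Rinv_mult.
    destruct (a <? n)%nat; [destruct (a + 1 =? 1)%nat; [|destruct (a + 1 =? n)%nat]
                          | destruct (a - n + 1 =? 1)%nat; [|destruct (a - n + 1 =? n)%nat]];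
    repeat (apply Forall_cons; [simpl; lra|]); apply Forall_nil. }
  induction Htrans as [|p L Hp _ IH]; simpl; [lra|].
  destruct (Nat.eqb (fst p) b); lra.
Qed.

Lemma K_rowsum a : (a < 2 * n)%nat -> sumR (2 * n) (fun b => K n U a b) = 1.
Proof.
  intros Ha. assert (Hu := inv_U_bounds). unfold K.
  destruct (index_cases a Ha) as [-> | [Ha' | [-> | [-> | [Ha' | ->]]]]];
    [rewrite trans_first | rewrite trans_unprimed by lia | rewrite trans_last
    | rewrite trans_first' | rewrite trans_primed by lia | rewrite trans_last'];
  cbn [fold_right fst snd]; rewrite ?sumR_plus;
  rewrite ?(sumR_ext _ (fun i => if Nat.eqb _ i then _ else 0) (fun i => if Nat.eqb i _ then _ else 0))
    by (intros; rewrite Nat.eqb_sym; reflexivity);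
  rewrite ?sumR_indicator by lia; rewrite ?sumR_const, ?Rmult_0_r, ?Rinv_mult; lra.
Qed.

Ltac at_position k c nx fl bd :=
  replace (cycle_index k) with c by (unfold cycle_index; bool_cases; lia);
  replace (cycle_next k) with nx by (unfold cycle_next; bool_cases; lia);
  replace (cycle_flip k) with fl by (unfold cycle_flip; bool_cases; lia);
  replace (on_boundary k) with bd by (unfold on_boundary; bool_cases; reflexivity).

Lemma cycle_kernel_le_K k l : (k < 2 * n)%nat -> (l < 2 * n)%nat ->
  cycle_kernel k l <= K n U (cycle_index k) (cycle_index l).
Proof.
  intros Hk Hl. assert (Hu := inv_U_bounds). unfold cycle_kernel, K.
  destruct (index_cases k Hk) as [Hc|[Hc|[Hc|[Hc|[Hc|Hc]]]]];
  [ at_position k 0%nat 1%nat (2 * n - 2)%nat true; rewrite trans_first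
  | at_position k k (S k) (2 * n - 2 - k)%nat false; rewrite trans_unprimed by lia
  | at_position k (n - 1)%nat n (n - 1)%nat true; rewrite trans_last
  | at_position k (2 * n - 1)%nat (S n) (n - 2)%nat true; rewrite trans_last'
  | at_position k (3 * n - 1 - k)%nat (S k) (2 * n - 2 - k)%nat false; rewrite trans_primed by lia
  | at_position k n 0%nat (2 * n - 1)%nat true; rewrite trans_first' ];
  cbn [fold_right fst snd]; rewrite ?Rinv_mult; unfold cycle_index, hold_prob, move_prob;
  bool_cases; lra.
Qed.

(** * Evolution of mass and Doeblin's argument *)

Definition unit_vec (x : nat) : nat -> R := fun a => if Nat.eqb a x then 1 else 0.

Lemma zt_linear v t y : (y < 2 * n)%nat ->
  zt n U v t y = sumR (2 * n) (fun x => v x * zt n U (unit_vec x) t y).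
Proof.
  revert y; induction t; intros y Hy; cbn [zt].
  - rewrite <- (sumR_indicator (2 * n) y (v y)) by auto. apply sumR_ext. intros i _.
    unfold unit_vec. destruct (Nat.eqb_spec i y), (Nat.eqb_spec y i); subst; try lia; lra.
  - transitivity (sumR (2 * n) (fun a => sumR (2 * n) (fun x => v x * zt n U (unit_vec x) t a * K n U a y))).
    + apply sumR_ext. intros a Ha. rewrite IHt, <- sumR_scal_r by auto. reflexivity.
    + rewrite sumR_swap. apply sumR_ext. intros x _. cbn [zt]. rewrite <- sumR_scal_l.
      apply sumR_ext. intros. ring.
Qed.

Lemma zt_sub_scal v w c t y :
  zt n U (fun a => v a - c * w a) t y = zt n U v t y - c * zt n U w t y.
Proof.
  revert y; induction t; intros y; cbn [zt]; [reflexivity|].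
  rewrite <- sumR_scal_l, <- sumR_minus. apply sumR_ext. intros. rewrite IHt. ring.
Qed.

Lemma zt_stationary pi t y : is_stationary n U pi -> (y < 2 * n)%nat -> zt n U pi t y = pi y.
Proof.
  intros [_ [_ Hpi]]. revert y; induction t; intros y Hy; cbn [zt]; [reflexivity|].
  rewrite <- (Hpi y Hy). apply sumR_ext. intros. rewrite IHt; auto.
Qed.

Lemma zt_add v a b y : zt n U v (a + b) y = zt n U (zt n U v a) b y.
Proof.
  revert y; induction b; intros y; [rewrite Nat.add_0_r; reflexivity|].
  rewrite Nat.add_succ_r. cbn [zt]. apply sumR_ext. intros. rewrite IHb. reflexivity.
Qed.

Lemma zt_nonneg v t y :
  (forall a, (a < 2 * n)%nat -> 0 <= v a) -> (y < 2 * n)%nat -> 0 <= zt n U v t y.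
Proof.
  intros Hv. revert y; induction t; intros y Hy; cbn [zt]; auto.
  apply sumR_nonneg. intros. apply Rmult_le_pos; auto. apply K_nonneg.
Qed.

Lemma zt_mass v t : sumR (2 * n) (fun y => zt n U v t y) = sumR (2 * n) v.
Proof.
  induction t; [reflexivity|]. rewrite <- IHt. cbn [zt]. rewrite sumR_swap.
  apply sumR_ext. intros a Ha. rewrite sumR_scal_l, K_rowsum by auto. ring.
Qed.

Definition l1_norm (v : nat -> R) : R := sumR (2 * n) (fun y => Rabs (v y)).

Lemma zt_l1_nonexpansive v t : l1_norm (zt n U v (S t)) <= l1_norm (zt n U v t).
Proof.
  unfold l1_norm.
  apply Rle_trans with (sumR (2 * n) (fun y => sumR (2 * n) (fun a => Rabs (zt n U v t a) * K n U a y))).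
  - apply sumR_le. intros y _. cbn [zt]. eapply Rle_trans; [apply sumR_abs|].
    apply sumR_le. intros a _. rewrite Rabs_mult, (Rabs_right (K n U a y)); [lra|].
    apply Rle_ge, K_nonneg.
  - rewrite sumR_swap. apply Req_le, sumR_ext. intros a Ha. rewrite sumR_scal_l, K_rowsum by auto. ring.
Qed.

Lemma zt_l1_nonexpansive_iter v t r : l1_norm (zt n U v (t + r)) <= l1_norm (zt n U v t).
Proof.
  induction r; [rewrite Nat.add_0_r; lra|].
  rewrite Nat.add_succ_r. eapply Rle_trans; [apply zt_l1_nonexpansive | exact IHr].
Qed.

Definition doeblin_minorant (m : nat) (nu : nat -> R) : Prop :=
  forall x y, (x < 2 * n)%nat -> (y < 2 * n)%nat -> nu y <= zt n U (unit_vec x) m y.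

Lemma doeblin_minorant_mass_le1 m nu : doeblin_minorant m nu -> sumR (2 * n) nu <= 1.
Proof.
  intros Hnu. apply Rle_trans with (sumR (2 * n) (fun y => zt n U (unit_vec 0) m y)).
  - apply sumR_le. intros. apply Hnu; lia.
  - rewrite zt_mass. unfold unit_vec. rewrite sumR_indicator by lia. lra.
Qed.

(* As [w] has total mass zero, [nu] can be subtracted from every row of the [m]-step kernel. *)
Lemma zt_doeblin_contraction m nu w : doeblin_minorant m nu -> sumR (2 * n) w = 0 ->
  l1_norm (zt n U w m) <= (1 - sumR (2 * n) nu) * l1_norm w.
Proof.
  intros Hnu Hw. unfold l1_norm.
  apply Rle_trans with
    (sumR (2 * n) (fun y => sumR (2 * n) (fun x => Rabs (w x) * (zt n U (unit_vec x) m y - nu y)))).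
  - apply sumR_le. intros y Hy. rewrite zt_linear by auto.
    replace (sumR (2 * n) (fun x => w x * zt n U (unit_vec x) m y))
      with (sumR (2 * n) (fun x => w x * (zt n U (unit_vec x) m y - nu y))).
    + eapply Rle_trans; [apply sumR_abs|]. apply sumR_le. intros x Hx.
      rewrite Rabs_mult, (Rabs_right (zt n U (unit_vec x) m y - nu y)); [lra|].
      specialize (Hnu x y Hx Hy). lra.
    + transitivity (sumR (2 * n) (fun x => w x * zt n U (unit_vec x) m y) - sumR (2 * n) w * nu y).
      * rewrite <- sumR_scal_r, <- sumR_minus. apply sumR_ext. intros. ring.
      * rewrite Hw. ring.
  - rewrite sumR_swap, Rmult_comm, <- sumR_scal_r. apply Req_le, sumR_ext. intros x Hx.
    rewrite sumR_scal_l, sumR_minus, zt_mass.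
    replace (sumR (2 * n) (unit_vec x)) with 1 by (symmetry; apply sumR_indicator; auto). ring.
Qed.

Lemma zt_l1_decay m nu w t : (0 < m)%nat -> doeblin_minorant m nu -> sumR (2 * n) w = 0 ->
  l1_norm (zt n U w t) <= (1 - sumR (2 * n) nu) ^ (t / m) * l1_norm w.
Proof.
  intros Hm Hnu Hw. pose proof (doeblin_minorant_mass_le1 m nu Hnu).
  assert (Hepochs : forall k, l1_norm (zt n U w (k * m)) <= (1 - sumR (2 * n) nu) ^ k * l1_norm w).
  { induction k; [simpl; lra|].
    replace (l1_norm (zt n U w (S k * m))) with (l1_norm (zt n U (zt n U w (k * m)) m))
      by (unfold l1_norm; apply sumR_ext; intros;
          replace (S k * m)%nat with (k * m + m)%nat by lia; rewrite zt_add; reflexivity).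
    eapply Rle_trans; [apply (zt_doeblin_contraction m nu); [auto | rewrite <- Hw; apply zt_mass]|].
    rewrite <- tech_pow_Rmult, Rmult_assoc. apply Rmult_le_compat_l; [lra | auto]. }
  set (k := (t / m)%nat).
  assert (Ht : t = (k * m + t mod m)%nat) by (unfold k; rewrite Nat.mul_comm; apply Nat.div_mod_eq).
  replace (zt n U w t) with (zt n U w (k * m + t mod m)) by (rewrite <- Ht; reflexivity).
  eapply Rle_trans; [apply zt_l1_nonexpansive_iter | apply Hepochs].
Qed.

(** * Walks with a single flip *)

Lemma iter_next_lt j k : (k < 2 * n)%nat -> (Nat.iter j cycle_next k < 2 * n)%nat.
Proof. intros. induction j; simpl; auto. apply cycle_next_lt; auto. Qed.

Lemma iter_next_eq j k : (k < 2 * n)%nat -> (j < 2 * n)%nat ->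
  Nat.iter j cycle_next k = if (k + j <? 2 * n)%nat then (k + j)%nat else (k + j - 2 * n)%nat.
Proof.
  intros Hk. induction j; intros Hj; simpl; [bool_cases; lia|].
  rewrite IHj by lia. unfold cycle_next. bool_cases; lia.
Qed.

Definition boundary_hits (k L : nat) : nat :=
  length (filter on_boundary (map (fun i => Nat.iter i cycle_next k) (seq 0 L))).

Lemma boundary_hits_S k L :
  boundary_hits k (S L) = (boundary_hits k L + Nat.b2n (on_boundary (Nat.iter L cycle_next k)))%nat.
Proof.
  unfold boundary_hits. rewrite seq_S, map_app, filter_app, length_app. simpl.
  destruct (on_boundary _); reflexivity.
Qed.

Lemma boundary_hits_le k L : (boundary_hits k L <= L)%nat.
Proof.
  unfold boundary_hits. eapply Nat.le_trans; [apply filter_length_le|].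
  rewrite length_map, length_seq. lia.
Qed.

(* Within [2n] steps the forward walk visits distinct positions, and only four are boundary. *)
Lemma boundary_hits_le4 k L : (k < 2 * n)%nat -> (L <= 2 * n)%nat -> (boundary_hits k L <= 4)%nat.
Proof.
  intros Hk HL. unfold boundary_hits.
  change 4%nat with (length [0; n - 1; n; 2 * n - 1])%nat.
  apply NoDup_incl_length.
  - apply NoDup_filter, NoDup_map_NoDup_ForallPairs; [|apply seq_NoDup].
    intros i j Hi Hj. apply in_seq in Hi, Hj. rewrite !iter_next_eq by lia. bool_cases; lia.
  - intros p Hp. apply filter_In in Hp as [_ Hp]. unfold on_boundary in Hp.
    rewrite !orb_true_iff, !Nat.eqb_eq in Hp. simpl. lia.
Qed.

Section Walk.

Variable x : nat.
Hypothesis x_lt : (x < 2 * n)%nat.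

(* Walks that move forward along the cycle from the position of [x], flip once after [s - 1]
   forward moves when [s > 0], and then move forward [j] more times. *)
Definition walk_start (s : nat) : nat :=
  match s with
  | O => cycle_index x
  | S s' => cycle_flip (Nat.iter s' cycle_next (cycle_index x))
  end.
Definition walk_pos (s j : nat) : nat := Nat.iter j cycle_next (walk_start s).
Definition walk_hits (s j : nat) : nat :=
  match s with
  | O => boundary_hits (cycle_index x) j
  | S _ => boundary_hits (cycle_index x) s + boundary_hits (walk_start s) j
  end.
Definition flip_weight (s j : nat) : R :=
  match s with O => (1 - / INR U) ^ j | S s' => (1 - / INR U) ^ (s' + j) * / INR U end.
Definition walk_weight (t s j : nat) : R :=
  flip_weight s j * path_weight t (walk_hits s j) (s + j) (on_boundary (walk_pos s j)).
Definition walk_mass (t l : nat) : R :=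
  sumR (S n) (fun s => sumR (2 * n) (fun j => if Nat.eqb (walk_pos s j) l then walk_weight t s j else 0)).

Lemma walk_start_lt s : (walk_start s < 2 * n)%nat.
Proof.
  assert (cycle_index x < 2 * n)%nat by (apply cycle_index_lt; auto).
  destruct s; simpl; auto. apply cycle_flip_lt, iter_next_lt; auto.
Qed.

Lemma walk_pos_lt s j : (walk_pos s j < 2 * n)%nat.
Proof. apply iter_next_lt, walk_start_lt. Qed.

Lemma walk_hits_le s j : (walk_hits s j <= s + j)%nat.
Proof.
  destruct s; [apply boundary_hits_le|]. unfold walk_hits.
  pose proof (boundary_hits_le (cycle_index x) (S s)).
  pose proof (boundary_hits_le (walk_start (S s)) j). lia.
Qed.

Lemma walk_hits_next s j :
  walk_hits s (S j) = (walk_hits s j + Nat.b2n (on_boundary (walk_pos s j)))%nat.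
Proof.
  unfold walk_hits, walk_pos. destruct s.
  - apply boundary_hits_S.
  - rewrite (boundary_hits_S (walk_start (S s))). lia.
Qed.

Lemma walk_hits_flip s :
  walk_hits (S s) 0 = (walk_hits 0 s + Nat.b2n (on_boundary (walk_pos 0 s)))%nat.
Proof. unfold walk_hits, walk_pos. rewrite boundary_hits_S. unfold boundary_hits at 2. simpl. lia. Qed.

Lemma flip_weight_nonneg s j : 0 <= flip_weight s j.
Proof.
  assert (Hu := inv_U_bounds). unfold flip_weight.
  destruct s; [|apply Rmult_le_pos]; try apply pow_le; lra.
Qed.

Lemma walk_weight_nonneg t s j : 0 <= walk_weight t s j.
Proof. apply Rmult_le_pos; [apply flip_weight_nonneg | apply path_weight_nonneg]. Qed.

(* Probability flowing into [(s, j)] from its predecessor: a forward move, or the flip. *)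
Definition arrival (t s j : nat) : R :=
  match j, s with
  | S j', _ => (1 - / INR U) * move_prob (on_boundary (walk_pos s j')) * walk_weight t s j'
  | O, S s' => / INR U * move_prob (on_boundary (walk_pos 0 s')) * walk_weight t 0 s'
  | O, O => 0
  end.

Lemma walk_weight_step t s j :
  walk_weight (S t) s j <= hold_prob (on_boundary (walk_pos s j)) * walk_weight t s j + arrival t s j.
Proof.
  assert (Hu := inv_U_bounds). unfold walk_weight, arrival.
  destruct j as [|j]; [destruct s as [|s]|].
  - unfold flip_weight. simpl. rewrite !Rmult_1_l, Rplus_0_r. apply path_weight_00_step.
  - replace (flip_weight (S s) 0) with (flip_weight 0 s * / INR U)
      by (unfold flip_weight; rewrite Nat.add_0_r; reflexivity).
    replace (S s + 0)%nat with (S (0 + s)) by lia. rewrite walk_hits_flip.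
    assert (P := path_weight_step t (walk_hits 0 s) (0 + s) (on_boundary (walk_pos (S s) 0))
                   (on_boundary (walk_pos 0 s)) (walk_hits_le 0 s)).
    assert (W := flip_weight_nonneg 0 s).
    apply Rmult_le_compat_l with (r := flip_weight 0 s * / INR U) in P; [|apply Rmult_le_pos; lra].
    eapply Rle_trans; [apply P | apply Req_le; unfold walk_weight; ring].
  - replace (flip_weight s (S j)) with (flip_weight s j * (1 - / INR U))
      by (unfold flip_weight; destruct s; rewrite ?Nat.add_succ_r; simpl; ring).
    replace (s + S j)%nat with (S (s + j)) by lia. rewrite walk_hits_next.
    assert (P := path_weight_step t (walk_hits s j) (s + j) (on_boundary (walk_pos s (S j)))
                   (on_boundary (walk_pos s j)) (walk_hits_le s j)).
    assert (W := flip_weight_nonneg s j).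
    apply Rmult_le_compat_l with (r := flip_weight s j * (1 - / INR U)) in P; [|apply Rmult_le_pos; lra].
    eapply Rle_trans; [apply P | apply Req_le; unfold walk_weight; ring].
Qed.

Lemma walk_weight_t0 s j : (0 < s + j)%nat -> walk_weight 0 s j = 0.
Proof. intros. unfold walk_weight. rewrite path_weight_t0 by auto. ring. Qed.

Lemma walk_weight_000 : walk_weight 0 0 0 <= 1.
Proof. unfold walk_weight, flip_weight. simpl. rewrite Rmult_1_l. apply path_weight_000_le1. Qed.

Definition forward_flow (t l s j : nat) : R :=
  walk_weight t s j *
  (if Nat.eqb l (cycle_next (walk_pos s j))
   then (1 - / INR U) * move_prob (on_boundary (walk_pos s j)) else 0).
Definition flip_flow (t l s j : nat) : R :=
  walk_weight t s j *
  (if Nat.eqb l (cycle_flip (walk_pos s j))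
   then / INR U * move_prob (on_boundary (walk_pos s j)) else 0).

Lemma forward_flow_nonneg t l s j : 0 <= forward_flow t l s j.
Proof.
  assert (Hu := inv_U_bounds). apply Rmult_le_pos; [apply walk_weight_nonneg|].
  destruct (Nat.eqb _ _); [apply Rmult_le_pos; [lra | apply move_prob_nonneg] | lra].
Qed.

Lemma flip_flow_nonneg t l s j : 0 <= flip_flow t l s j.
Proof.
  assert (Hu := inv_U_bounds). apply Rmult_le_pos; [apply walk_weight_nonneg|].
  destruct (Nat.eqb _ _); [apply Rmult_le_pos; [lra | apply move_prob_nonneg] | lra].
Qed.

(* Arrivals by a forward move are indexed by their origin [(s, j)], arrivals by the flip by
   [(0, s)]; the last forward step and the walks with [s >= n] are simply dropped. *)
Lemma arrival_mass t l :
  sumR (S n) (fun s => sumR (2 * n) (fun j => if Nat.eqb (walk_pos s j) l then arrival t s j else 0)) <=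
  sumR (S n) (fun s => sumR (2 * n) (forward_flow t l s)) +
  sumR (S n) (fun s => sumR (2 * n) (flip_flow t l s)).
Proof.
  assert (Hforward : forall s,
    sumR (2 * n - 1) (fun j => if Nat.eqb (walk_pos s (S j)) l then arrival t s (S j) else 0)
      <= sumR (2 * n) (forward_flow t l s)).
  { intros s. eapply Rle_trans;
      [apply Req_le, sumR_ext | apply sumR_le_prefix; [lia | intros; apply forward_flow_nonneg]].
    intros j _. unfold arrival, forward_flow. change (walk_pos s (S j)) with (cycle_next (walk_pos s j)).
    destruct (Nat.eqb_spec (cycle_next (walk_pos s j)) l), (Nat.eqb_spec l (cycle_next (walk_pos s j)));
      try lia; lra. }
  assert (Hflipped :
    sumR n (fun s => if Nat.eqb (walk_pos (S s) 0) l then arrival t (S s) 0 else 0)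
      <= sumR (S n) (fun s => sumR (2 * n) (flip_flow t l s))).
  { rewrite sumR_shift.
    assert (0 <= sumR n (fun s => sumR (2 * n) (flip_flow t l (S s))))
      by (apply sumR_nonneg; intros; apply sumR_nonneg; intros; apply flip_flow_nonneg).
    assert (sumR n (flip_flow t l 0) <= sumR (2 * n) (flip_flow t l 0))
      by (apply sumR_le_prefix; [lia | intros; apply flip_flow_nonneg]).
    enough (sumR n (fun s => if Nat.eqb (walk_pos (S s) 0) l then arrival t (S s) 0 else 0)
              = sumR n (flip_flow t l 0)) by lra.
    apply sumR_ext. intros s _. unfold arrival, flip_flow.
    change (walk_pos (S s) 0) with (cycle_flip (walk_pos 0 s)).
    destruct (Nat.eqb_spec (cycle_flip (walk_pos 0 s)) l), (Nat.eqb_spec l (cycle_flip (walk_pos 0 s)));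
      try lia; lra. }
  assert (Hsplit : forall s, sumR (2 * n) (fun j => if Nat.eqb (walk_pos s j) l then arrival t s j else 0)
    = (if Nat.eqb (walk_pos s 0) l then arrival t s 0 else 0) +
      sumR (2 * n - 1) (fun j => if Nat.eqb (walk_pos s (S j)) l then arrival t s (S j) else 0)).
  { intros. replace (2 * n)%nat with (S (2 * n - 1)) at 1 by lia. apply sumR_shift. }
  rewrite (sumR_ext _ _ _ (fun s _ => Hsplit s)), sumR_plus, sumR_shift.
  replace (if Nat.eqb (walk_pos 0 0) l then arrival t 0 0 else 0) with 0
    by (destruct (Nat.eqb _ _); reflexivity).
  assert (sumR (S n) (fun s => sumR (2 * n - 1) (fun j =>
            if Nat.eqb (walk_pos s (S j)) l then arrival t s (S j) else 0))
          <= sumR (S n) (fun s => sumR (2 * n) (forward_flow t l s)))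
    by (apply sumR_le; intros; apply Hforward).
  lra.
Qed.

Lemma walk_mass_step t l :
  walk_mass (S t) l <=
  sumR (S n) (fun s => sumR (2 * n) (fun j => walk_weight t s j * cycle_kernel (walk_pos s j) l)).
Proof.
  set (hold_flow := fun s j =>
    if Nat.eqb (walk_pos s j) l then hold_prob (on_boundary (walk_pos s j)) * walk_weight t s j else 0).
  apply Rle_trans with (sumR (S n) (fun s => sumR (2 * n) (hold_flow s)) +
    sumR (S n) (fun s => sumR (2 * n) (fun j => if Nat.eqb (walk_pos s j) l then arrival t s j else 0))).
  { rewrite <- sumR_plus. apply sumR_le. intros s _. rewrite <- sumR_plus. apply sumR_le. intros j _.
    unfold hold_flow. destruct (Nat.eqb _ _); [apply walk_weight_step | lra]. }
  eapply Rle_trans; [apply Rplus_le_compat_l, arrival_mass|].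
  rewrite <- !sumR_plus. apply Req_le, sumR_ext. intros s _. rewrite <- !sumR_plus.
  apply sumR_ext. intros j _. unfold hold_flow, forward_flow, flip_flow, cycle_kernel.
  destruct (Nat.eqb_spec (walk_pos s j) l), (Nat.eqb_spec l (walk_pos s j)); try lia; lra.
Qed.

Lemma walk_mass_0 l : (l < 2 * n)%nat -> walk_mass 0 l <= unit_vec x (cycle_index l).
Proof.
  intros Hl. unfold walk_mass. rewrite sumR_shift, (sumR_ext n _ (fun _ => 0)), sumR_const.
  2: { intros s _. rewrite (sumR_ext _ _ (fun _ => 0)), sumR_const; [lra|].
       intros j _. rewrite walk_weight_t0 by lia. destruct (Nat.eqb _ _); auto. }
  replace (2 * n)%nat with (S (2 * n - 1)) by lia.
  rewrite sumR_shift, (sumR_ext _ _ (fun _ => 0)), sumR_const.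
  2: { intros j _. rewrite walk_weight_t0 by lia. destruct (Nat.eqb _ _); auto. }
  pose proof walk_weight_000. pose proof (walk_weight_nonneg 0 0 0).
  unfold unit_vec. change (walk_pos 0 0) with (cycle_index x).
  destruct (Nat.eqb_spec (cycle_index x) l) as [<-|].
  - rewrite cycle_index_involutive, !Nat.eqb_refl by auto. lra.
  - destruct (Nat.eqb _ _); lra.
Qed.

Lemma walk_mass_regroup t y :
  sumR (2 * n) (fun a => walk_mass t (cycle_index a) * K n U a y) =
  sumR (S n) (fun s => sumR (2 * n) (fun j => walk_weight t s j * K n U (cycle_index (walk_pos s j)) y)).
Proof.
  unfold walk_mass.
  rewrite (sumR_ext (2 * n) _ (fun a => sumR (S n) (fun s => sumR (2 * n) (fun j =>
    (if Nat.eqb (walk_pos s j) (cycle_index a) then walk_weight t s j else 0) * K n U a y))))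
    by (intros; rewrite <- sumR_scal_r; apply sumR_ext; intros; symmetry; apply sumR_scal_r).
  rewrite sumR_swap. apply sumR_ext. intros s _. rewrite sumR_swap. apply sumR_ext. intros j _.
  pose proof (walk_pos_lt s j).
  rewrite <- (sumR_indicator (2 * n) (cycle_index (walk_pos s j))
    (walk_weight t s j * K n U (cycle_index (walk_pos s j)) y)) by (apply cycle_index_lt; auto).
  apply sumR_ext. intros a Ha.
  destruct (Nat.eqb_spec a (cycle_index (walk_pos s j))) as [->|Hne].
  - rewrite cycle_index_involutive, Nat.eqb_refl by auto. lra.
  - destruct (Nat.eqb_spec (walk_pos s j) (cycle_index a)) as [E|]; [|lra].
    rewrite E, cycle_index_involutive in Hne by auto. easy.
Qed.

Lemma walk_mass_le_zt t l : (l < 2 * n)%nat -> walk_mass t l <= zt n U (unit_vec x) t (cycle_index l).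
Proof.
  revert l. induction t; intros l Hl; [apply walk_mass_0; auto|].
  eapply Rle_trans; [apply walk_mass_step|].
  apply Rle_trans with (sumR (2 * n) (fun a => walk_mass t (cycle_index a) * K n U a (cycle_index l))).
  { rewrite walk_mass_regroup. apply sumR_le; intros s _; apply sumR_le; intros j _.
    apply Rmult_le_compat_l; [apply walk_weight_nonneg|].
    apply cycle_kernel_le_K; auto. apply walk_pos_lt. }
  cbn [zt]. apply sumR_le. intros a Ha. apply Rmult_le_compat_r; [apply K_nonneg|].
  rewrite <- (cycle_index_involutive a) at 2 by auto. apply IHt, cycle_index_lt; auto.
Qed.

Definition steps_to (y s : nat) : nat :=
  let f := walk_start (S s) in if (f <=? y)%nat then (y - f)%nat else (y + 2 * n - f)%nat.

Lemma steps_to_lt y s : (y < 2 * n)%nat -> (steps_to y s < 2 * n)%nat.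
Proof. intros. unfold steps_to. pose proof (walk_start_lt (S s)). bool_cases; lia. Qed.

Lemma walk_pos_steps_to y s : (y < 2 * n)%nat -> walk_pos (S s) (steps_to y s) = y.
Proof.
  intros. pose proof (walk_start_lt (S s)). unfold walk_pos.
  rewrite iter_next_eq by (auto using steps_to_lt). unfold steps_to. bool_cases; lia.
Qed.

Lemma moves_to_eq y s : (y < 2 * n)%nat -> (s < n)%nat ->
  (S s + steps_to y s =
   if steps_to y 0 + s <? 2 * n then steps_to y 0 + 2 * s + 1 else steps_to y 0 + 2 * s + 1 - 2 * n)%nat.
Proof.
  intros. assert (cycle_index x < 2 * n)%nat by (apply cycle_index_lt; auto).
  unfold steps_to, walk_start. cbv zeta. rewrite !iter_next_eq by lia. unfold cycle_flip. bool_cases; lia.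
Qed.

Lemma walk_hits_le8 s j : (s < n)%nat -> (j <= 2 * n)%nat -> (walk_hits (S s) j <= 8)%nat.
Proof.
  intros. unfold walk_hits.
  pose proof (boundary_hits_le4 (cycle_index x) (S s) (cycle_index_lt x x_lt) ltac:(lia)).
  pose proof (boundary_hits_le4 (walk_start (S s)) j (walk_start_lt (S s)) ltac:(lia)). lia.
Qed.

Definition epoch : nat := (3 * n + 8)%nat.

(* The weight of one hold/move history of length [epoch] with a single flip. *)
Definition pattern_weight : R := / INR U * (1 - / INR U) ^ epoch * (/ 2) ^ epoch.

Lemma walk_weight_lower y s : (y < 2 * n)%nat -> on_boundary y = false -> (s < n)%nat ->
  pattern_weight * INR (npaths epoch (walk_hits (S s) (steps_to y s)) (S s + steps_to y s))
    <= walk_weight epoch (S s) (steps_to y s).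
Proof.
  intros Hy Hint Hs. assert (Hu := inv_U_bounds). pose proof (steps_to_lt y s Hy).
  unfold walk_weight, pattern_weight. rewrite walk_pos_steps_to, Hint by auto.
  unfold path_weight, flip_weight.
  assert ((1 - / INR U) ^ epoch <= (1 - / INR U) ^ (s + steps_to y s))
    by (apply pow_le_of_le1; unfold epoch; lra || lia).
  set (N := INR (npaths epoch (walk_hits (S s) (steps_to y s)) (S s + steps_to y s))).
  assert (0 <= / INR U * (/ 2) ^ epoch * N)
    by (apply Rmult_le_pos; [apply Rmult_le_pos; [lra | apply pow_le; lra] | apply pos_INR]).
  replace (/ INR U * (1 - / INR U) ^ epoch * (/ 2) ^ epoch * N)
    with ((1 - / INR U) ^ epoch * (/ INR U * (/ 2) ^ epoch * N)) by ring.
  replace ((1 - / INR U) ^ (s + steps_to y s) * / INR U * ((/ 2) ^ epoch * N))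
    with ((1 - / INR U) ^ (s + steps_to y s) * (/ INR U * (/ 2) ^ epoch * N)) by ring.
  apply Rmult_le_compat_r; auto.
Qed.

Lemma zt_lower_by_walks y : (y < 2 * n)%nat -> on_boundary y = false ->
  pattern_weight * sumR n (fun s => INR (npaths epoch (walk_hits (S s) (steps_to y s)) (S s + steps_to y s)))
    <= zt n U (unit_vec x) epoch (cycle_index y).
Proof.
  intros Hy Hint. eapply Rle_trans; [|apply walk_mass_le_zt; auto].
  unfold walk_mass. rewrite sumR_shift, <- sumR_scal_l.
  assert (0 <= sumR (2 * n) (fun j => if Nat.eqb (walk_pos 0 j) y then walk_weight epoch 0 j else 0)).
  { apply sumR_nonneg. intros. destruct (Nat.eqb _ _); [apply walk_weight_nonneg | lra]. }
  enough (sumR n (fun s => pattern_weight *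
            INR (npaths epoch (walk_hits (S s) (steps_to y s)) (S s + steps_to y s))) <=
          sumR n (fun s => sumR (2 * n) (fun j =>
            if Nat.eqb (walk_pos (S s) j) y then walk_weight epoch (S s) j else 0)))
    by lra.
  apply sumR_le. intros s Hs. eapply Rle_trans; [apply walk_weight_lower; auto|].
  set (g := fun j => if Nat.eqb (walk_pos (S s) j) y then walk_weight epoch (S s) j else 0).
  replace (walk_weight epoch (S s) (steps_to y s)) with (g (steps_to y s))
    by (unfold g; rewrite walk_pos_steps_to, Nat.eqb_refl by auto; reflexivity).
  apply sumR_term_le.
  - intros. unfold g. destruct (Nat.eqb _ _); [apply walk_weight_nonneg | lra].
  - apply steps_to_lt; auto.
Qed.

(* Pascal's rule splits each term in two, and by [moves_to_eq] the number of moves advances by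
   two per flip time, so the halves tile [2n] cyclically consecutive arguments; these contain
   the window [[n + 1, 2n + 1)]. *)
Lemma flip_paths_window y : (y < 2 * n)%nat ->
  sumR n (fun k => INR (npaths epoch 9 (n + 1 + k))) <=
  sumR n (fun s => INR (npaths epoch 8 (S s + steps_to y s))).
Proof.
  intros Hy. set (h := fun k => INR (npaths epoch 9 k)).
  assert (Hh : forall k, 0 <= h k) by (intros; apply pos_INR).
  assert (Hpascal : forall r, INR (npaths epoch 8 r) = h r + h (S r)).
  { intros. unfold h. rewrite <- plus_INR. f_equal.
    rewrite (npaths_pascal_b epoch 8 r) by (unfold epoch; lia). lia. }
  set (a := steps_to y 0). assert (Ha : (a < 2 * n)%nat) by (apply steps_to_lt; auto).
  assert (Hrun : forall s0 len b, (s0 + len <= n)%nat ->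
    (forall i, (i < len)%nat -> (S (s0 + i) + steps_to y (s0 + i) = b + 2 * i)%nat) ->
    sumR len (fun i => INR (npaths epoch 8 (S (s0 + i) + steps_to y (s0 + i)))) =
    sumR (2 * len) (fun k => h (b + k)%nat)).
  { intros s0 len b Hlen Hi. rewrite <- sumR_pairs. apply sumR_ext. intros i Hil.
    rewrite Hpascal, Hi by auto. f_equal. f_equal. lia. }
  assert (Hrun0 : forall len b, (len <= n)%nat ->
    (forall i, (i < len)%nat -> (S i + steps_to y i = b + 2 * i)%nat) ->
    sumR len (fun i => INR (npaths epoch 8 (S i + steps_to y i))) = sumR (2 * len) (fun k => h (b + k)%nat))
    by (intros; apply (Hrun 0%nat); auto).
  destruct (Nat.le_gt_cases (a + n) (2 * n)) as [Hnowrap|Hwrap].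
  - rewrite (Hrun0 n (a + 1)%nat); [apply (sumR_window_le n h); auto; lia | lia |].
    intros i Hi. rewrite moves_to_eq by (auto; lia). fold a. bool_cases; lia.
  - set (s0 := (2 * n - a)%nat).
    replace (sumR n (fun s => INR (npaths epoch 8 (S s + steps_to y s))))
      with (sumR (s0 + (n - s0)) (fun s => INR (npaths epoch 8 (S s + steps_to y s)))) by (f_equal; lia).
    rewrite sumR_add.
    rewrite (Hrun0 s0 (a + 1)%nat), (Hrun s0 (n - s0)%nat (2 * n - a + 1)%nat);
      try (intros i Hi; rewrite moves_to_eq by (auto; lia); fold a; bool_cases; unfold s0 in *; lia);
      try lia.
    eapply Rle_trans; [apply (sumR_window_le n h (2 * n - a + 1)%nat); auto; lia|].
    replace (2 * n)%nat with (2 * (n - s0) + 2 * s0)%nat at 1 by lia. rewrite sumR_add.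
    rewrite (sumR_ext (2 * s0) _ (fun k => h (a + 1 + k)%nat)) by (intros; f_equal; unfold s0; lia).
    lra.
Qed.

(* For [n < 42] a single hold/move pattern is counted. *)
Definition interior_bound : R := if (42 <=? n)%nat then 2 ^ (3 * n - 2) else 1.

Lemma pattern_weight_nonneg : 0 <= pattern_weight.
Proof.
  assert (Hu := inv_U_bounds). unfold pattern_weight.
  apply Rmult_le_pos; [apply Rmult_le_pos|]; try apply pow_le; lra.
Qed.

Lemma zt_interior_lower y : (y < 2 * n)%nat -> on_boundary y = false ->
  pattern_weight * interior_bound <= zt n U (unit_vec x) epoch (cycle_index y).
Proof.
  intros Hy Hint. eapply Rle_trans; [|apply zt_lower_by_walks; auto].
  apply Rmult_le_compat_l; [apply pattern_weight_nonneg|]. unfold interior_bound. bool_cases.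
  - eapply Rle_trans; [apply binom_window_lower; lia|].
    rewrite (sumR_ext n _ (fun k => INR (npaths epoch 9 (n + 1 + k))))
      by (intros; unfold epoch; rewrite npaths_window by lia; reflexivity).
    eapply Rle_trans; [apply (flip_paths_window y Hy)|].
    apply sumR_le. intros s Hs. apply le_INR.
    pose proof (walk_hits_le8 s (steps_to y s) Hs ltac:(pose proof (steps_to_lt y s Hy); lia)).
    set (b := walk_hits (S s) (steps_to y s)) in *.
    replace 8%nat with (b + (8 - b))%nat at 1 by lia. apply npaths_antimono_b.
  - set (g := fun s => INR (npaths epoch (walk_hits (S s) (steps_to y s)) (S s + steps_to y s))).
    apply Rle_trans with (g 0%nat); [|apply sumR_term_le; [intros; apply pos_INR | lia]].
    apply (le_INR 1). pose proof (walk_hits_le 1 (steps_to y 0)). pose proof (steps_to_lt y 0 Hy).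
    apply npaths_gt0; unfold epoch; lia.
Qed.

End Walk.

Definition minorant (y : nat) : R :=
  if on_boundary (cycle_index y) then 0 else pattern_weight * interior_bound.

Lemma minorant_is_doeblin : doeblin_minorant epoch minorant.
Proof.
  intros x y Hx Hy. unfold minorant. destruct (on_boundary (cycle_index y)) eqn:Hbd.
  - apply zt_nonneg; auto. intros a _. unfold unit_vec. destruct (Nat.eqb a x); lra.
  - rewrite <- (cycle_index_involutive y) by auto.
    apply zt_interior_lower; auto. apply cycle_index_lt; auto.
Qed.

Lemma minorant_mass : INR (n - 2) * (pattern_weight * interior_bound) <= sumR (2 * n) minorant.
Proof.
  assert (0 <= pattern_weight * interior_bound).
  { apply Rmult_le_pos; [apply pattern_weight_nonneg|]. unfold interior_bound.
    destruct (42 <=? n)%nat; [apply pow_le|]; lra. }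
  assert (Hnn : forall y, 0 <= minorant y) by (intros; unfold minorant; destruct (on_boundary _); lra).
  replace (2 * n)%nat with (1 + (n - 2) + (n + 1))%nat by lia.
  rewrite (sumR_add (1 + (n - 2)) (n + 1)), (sumR_add 1 (n - 2)), <- sumR_const.
  assert (0 <= sumR 1 minorant) by (apply sumR_nonneg; auto).
  assert (0 <= sumR (n + 1) (fun i => minorant (1 + (n - 2) + i))) by (apply sumR_nonneg; auto).
  enough (sumR (n - 2) (fun _ => pattern_weight * interior_bound) = sumR (n - 2) (fun i => minorant (1 + i)))
    by lra.
  apply sumR_ext. intros i Hi. unfold minorant, cycle_index, on_boundary. bool_cases. reflexivity.
Qed.

End Cycle.

(** * Dependence on [c] and the mixing time *)

Lemma INR_ge3 k : (3 <= k)%nat -> 3 <= INR k.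
Proof. intros. replace 3 with (INR 3) by (simpl; lra). apply le_INR. auto. Qed.

Lemma exp_le_compat a b : a <= b -> exp a <= exp b.
Proof. intros [Hlt | ->]; [apply Rlt_le, exp_increasing; auto | lra]. Qed.

Lemma exp_pow a m : exp a ^ m = exp (INR m * a).
Proof.
  induction m; [simpl; rewrite Rmult_0_l, exp_0; reflexivity|].
  rewrite S_INR. simpl pow. rewrite IHm, <- exp_plus. f_equal. ring.
Qed.

Lemma exp_neg_le_one_minus u : 0 <= u <= 1 / 2 -> exp (- (2 * u)) <= 1 - u.
Proof.
  intros Hu. pose proof (exp_ineq1_le (2 * u)). pose proof (exp_pos (2 * u)).
  rewrite exp_Ropp. assert ((1 + 2 * u) * (1 - u) >= 1) by nra.
  apply Rmult_le_reg_l with (exp (2 * u)); auto. rewrite Rinv_r by lra. nra.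
Qed.

Lemma binomial_scale_lower n : (/ 2) ^ 131 <= (/ 2) ^ epoch n * interior_bound n.
Proof.
  unfold interior_bound, epoch. bool_cases.
  - replace (3 * n + 8)%nat with ((3 * n - 2) + 10)%nat by lia.
    rewrite pow_add, (Rmult_comm ((/ 2) ^ (3 * n - 2))), Rmult_assoc, <- Rpow_mult_distr, Rinv_l, pow1 by lra.
    rewrite Rmult_1_r. apply pow_le_of_le1; [lra | lia].
  - rewrite Rmult_1_r. apply pow_le_of_le1; [lra | lia].
Qed.

Section Constants.

Variables (c : R) (n U : nat).
Hypothesis c_ge1 : 1 <= c.
Hypothesis n_ge3 : (3 <= n)%nat.
Hypothesis U_ge3 : (3 <= U)%nat.
Hypothesis U_comparable : INR n / c <= INR U <= c * INR n.

Lemma inv_U_le_c_div_n : / INR U <= c / INR n.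
Proof.
  pose proof (INR_ge3 n n_ge3). destruct U_comparable as [H1 _].
  replace (c / INR n) with (/ (INR n / c)) by (field; lra).
  apply Rinv_le_contravar; auto. apply Rdiv_lt_0_compat; lra.
Qed.

Lemma flip_rate_lower : / (3 * c) <= INR (n - 2) * / INR U.
Proof.
  pose proof (INR_ge3 n n_ge3). pose proof (INR_ge3 U U_ge3). destruct U_comparable as [_ H2].
  rewrite minus_INR by lia. replace (INR 2) with 2 by (simpl; lra).
  apply Rmult_le_reg_l with (3 * c * INR U); [nra|].
  replace (3 * c * INR U * / (3 * c)) with (INR U) by (field; lra).
  replace (3 * c * INR U * ((INR n - 2) * / INR U)) with (3 * c * (INR n - 2)) by (field; lra). nra.
Qed.

Lemma no_flip_lower : exp (- (12 * c)) <= (1 - / INR U) ^ epoch n.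
Proof.
  pose proof (INR_ge3 n n_ge3). pose proof (INR_ge3 U U_ge3). pose proof inv_U_le_c_div_n.
  assert (0 < / INR U) by (apply Rinv_0_lt_compat; lra).
  assert (/ INR U <= / 3) by (apply Rinv_le_contravar; lra).
  assert (Hm : / INR U * INR (epoch n) <= 6 * c).
  { unfold epoch. rewrite plus_INR, mult_INR.
    replace (INR 3) with 3 by (simpl; lra). replace (INR 8) with 8 by (simpl; lra).
    apply Rle_trans with (c / INR n * (3 * INR n + 8)); [apply Rmult_le_compat_r; lra|].
    apply Rmult_le_reg_l with (INR n); [lra|].
    replace (INR n * (c / INR n * (3 * INR n + 8))) with (c * (3 * INR n + 8)) by (field; lra). nra. }
  eapply Rle_trans; [|apply pow_incr; split; [left; apply exp_pos | apply exp_neg_le_one_minus; lra]].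
  rewrite exp_pow. apply exp_le_compat. nra.
Qed.

End Constants.

Definition doeblin_const (c : R) : R := exp (- (12 * c)) * / (3 * c) * (/ 2) ^ 131.

Lemma doeblin_const_pos c : 1 <= c -> 0 < doeblin_const c.
Proof.
  intros. unfold doeblin_const. apply Rmult_lt_0_compat; [apply Rmult_lt_0_compat|].
  - apply exp_pos.
  - apply Rinv_0_lt_compat; lra.
  - apply pow_lt; lra.
Qed.

Lemma doeblin_const_le_minorant_mass c n U : 1 <= c -> (3 <= n)%nat -> (3 <= U)%nat ->
  INR n / c <= INR U <= c * INR n -> doeblin_const c <= sumR (2 * n) (minorant n U).
Proof.
  intros Hc Hn HU HnU. eapply Rle_trans; [|apply minorant_mass; lia].
  pose proof (flip_rate_lower c n U Hc Hn HU HnU). pose proof (no_flip_lower c n U Hc Hn HU HnU).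
  pose proof (binomial_scale_lower n). pose proof (exp_pos (- (12 * c))).
  assert (0 < / (3 * c)) by (apply Rinv_0_lt_compat; lra). assert (0 < (/ 2) ^ 131) by (apply pow_lt; lra).
  unfold doeblin_const, pattern_weight.
  replace (INR (n - 2) * (/ INR U * (1 - / INR U) ^ epoch n * (/ 2) ^ epoch n * interior_bound n))
    with ((INR (n - 2) * / INR U) * (1 - / INR U) ^ epoch n * ((/ 2) ^ epoch n * interior_bound n)) by ring.
  rewrite (Rmult_comm (exp _)).
  apply Rmult_le_compat; [nra | lra | apply Rmult_le_compat; lra | auto].
Qed.

Lemma decay_factor_small d n eps m t : 0 < d <= 1 -> (3 <= n)%nat -> 0 < eps <= 1 / 2 ->
  (0 < m <= 6 * n)%nat -> 6 * (2 / d + 1) * INR n * ln (INR n / eps) <= INR t ->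
  (1 - d) ^ (t / m) <= (eps / INR n) ^ 2.
Proof.
  intros Hd Hn Heps Hm Ht. pose proof (INR_ge3 n Hn).
  set (L := ln (INR n / eps)) in *. set (k := (t / m)%nat).
  assert (HnE : 6 <= INR n / eps).
  { apply Rmult_le_reg_l with eps; [lra|]. replace (eps * (INR n / eps)) with (INR n) by (field; lra). lra. }
  assert (HL : 1 <= L).
  { destruct (Rle_lt_dec 1 L) as [|Hlt]; auto. apply exp_increasing in Hlt.
    unfold L in Hlt. rewrite exp_ln in Hlt by lra. pose proof exp_le_3. lra. }
  assert (Hkd : 2 * L <= d * INR k).
  { assert (Hmn : INR m <= 6 * INR n)
      by (replace 6 with (INR 6) by (simpl; lra); rewrite <- mult_INR; apply le_INR; lia).
    assert (Htk : INR t < (INR k + 1) * INR m).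
    { rewrite <- S_INR, <- mult_INR. apply lt_INR. unfold k.
      pose proof (Nat.div_mod_eq t m). pose proof (Nat.mod_upper_bound t m ltac:(lia)). nia. }
    assert (0 <= INR k) by apply pos_INR.
    assert ((2 / d + 1) * L < INR k + 1).
    { apply Rmult_lt_reg_r with (6 * INR n); [lra|]. nra. }
    assert (d * ((2 / d + 1) * L) < d * (INR k + 1)) by (apply Rmult_lt_compat_l; lra).
    replace (d * ((2 / d + 1) * L)) with (2 * L + d * L) in * by (field; lra). nra. }
  apply Rle_trans with (exp (- d) ^ k).
  { apply pow_incr. pose proof (exp_ineq1_le (- d)). lra. }
  rewrite exp_pow. apply Rle_trans with (exp (- (2 * L))); [apply exp_le_compat; lra|].
  replace (- (2 * L)) with (- L + - L) by ring. rewrite exp_plus, exp_Ropp. unfold L. rewrite exp_ln by lra.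
  apply Req_le. field. lra.
Qed.

Lemma decay_to_precision d n eps m t F : 0 < d <= 1 -> (3 <= n)%nat -> 0 < eps <= 1 / 2 ->
  (0 < m <= 6 * n)%nat -> 0 < F -> 6 * (2 / d + 1) * INR n * ln (INR n / eps) <= INR t ->
  (1 - d) ^ (t / m) * (2 * F) <= eps / (2 * INR n) * F.
Proof.
  intros Hd Hn Heps Hm HF Ht. pose proof (INR_ge3 n Hn).
  apply Rle_trans with ((eps / INR n) ^ 2 * (2 * F)).
  { apply Rmult_le_compat_r; [lra|]. apply decay_factor_small; auto. }
  assert (0 < eps / INR n <= 1 / 4).
  { split; [apply Rdiv_lt_0_compat; lra|]. apply Rmult_le_reg_l with (INR n); [lra|].
    replace (INR n * (eps / INR n)) with eps by (field; lra). lra. }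
  replace (eps / (2 * INR n) * F) with (eps / INR n * (F / 2)) by (field; lra).
  set (e := eps / INR n) in *.
  assert (0 <= e * F * (1 / 4 - e)) by (apply Rmult_le_pos; [apply Rmult_le_pos|]; lra).
  simpl pow. nra.
Qed.

Lemma deviation_l1_le n z0 pi : (forall x, (x < 2 * n)%nat -> 0 <= z0 x) ->
  (forall x, (x < 2 * n)%nat -> 0 <= pi x) -> sumR (2 * n) pi = 1 ->
  l1_norm n (fun x => z0 x - sumR (2 * n) z0 * pi x) <= 2 * sumR (2 * n) z0.
Proof.
  intros Hz Hpi Hpi1. unfold l1_norm. set (F := sumR (2 * n) z0).
  assert (0 <= F) by (apply sumR_nonneg; auto).
  apply Rle_trans with (sumR (2 * n) (fun x => z0 x + F * pi x)).
  - apply sumR_le. intros x Hx. specialize (Hz x Hx). specialize (Hpi x Hx).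
    assert (0 <= F * pi x) by (apply Rmult_le_pos; lra). apply Rabs_le. lra.
  - rewrite sumR_plus, sumR_scal_l, Hpi1. fold F. lra.
Qed.

Theorem lemma13 : forall c : R, 1 <= c ->
  exists C : R, 0 < C /\
  forall n U : nat, (3 <= n)%nat -> (3 <= U)%nat ->
  INR n / c <= INR U <= c * INR n ->
  forall pi : nat -> R, is_stationary n U pi ->
  forall z0 : nat -> R, (forall x, (x < 2 * n)%nat -> 0 <= z0 x) ->
  0 < sumR (2 * n) z0 ->
  forall eps : R, 0 < eps <= 1 / 2 ->
  forall t : nat, C * INR n * ln (INR n / eps) <= INR t ->
  forall x : nat, (x < 2 * n)%nat ->
  Rabs (zt n U z0 t x - pi x * sumR (2 * n) z0) <= eps / (2 * INR n) * sumR (2 * n) z0.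
Proof.
  intros c Hc. pose proof (doeblin_const_pos c Hc) as Hd. set (d := doeblin_const c) in *.
  exists (6 * (2 / d + 1)). split; [pose proof (Rdiv_lt_0_compat 2 d ltac:(lra) Hd); lra|].
  intros n U Hn HU HnU pi Hpi z0 Hz0 HF eps Heps t Ht x Hx.
  set (F := sumR (2 * n) z0) in *. set (w := fun a => z0 a - F * pi a).
  pose proof (minorant_is_doeblin n U Hn ltac:(lia)) as Hmin.
  pose proof (doeblin_minorant_mass_le1 n U Hn ltac:(lia) _ _ Hmin).
  pose proof (doeblin_const_le_minorant_mass c n U Hc Hn HU HnU) as Hmass. fold d in Hmass.
  pose proof Hpi as [Hpi0 [Hpi1 _]].
  replace (zt n U z0 t x - pi x * F) with (zt n U w t x)
    by (unfold w; rewrite zt_sub_scal, (zt_stationary n U pi t x Hpi Hx); ring).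
  assert (Hw : sumR (2 * n) w = 0) by (unfold w; rewrite sumR_minus, sumR_scal_l, Hpi1; fold F; ring).
  apply Rle_trans with (l1_norm n (zt n U w t)).
  { apply (sumR_term_le (2 * n) (fun y => Rabs (zt n U w t y))); auto. intros; apply Rabs_pos. }
  eapply Rle_trans;
    [apply (zt_l1_decay n U Hn ltac:(lia) (epoch n) (minorant n U)); auto; unfold epoch; lia|].
  apply Rle_trans with ((1 - d) ^ (t / epoch n) * (2 * F)).
  { apply Rmult_le_compat; [apply pow_le; lra | apply sumR_nonneg; intros; apply Rabs_pos | |].
    - apply pow_incr. lra.
    - apply deviation_l1_le; auto. }
  apply decay_to_precision; auto; [lra | unfold epoch; lia].
Qed.
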